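(* Let ${\mathbf a}_1,\dots,{\mathbf a}_m\in\mathbb{C}^n$ and let $\mathcal{A}:\mathbb{H}^{n\times n}\to\mathbb{R}^m$, $\mathcal{A}(X)=({\mathbf a}_1^*X{\mathbf a}_1,\dots,{\mathbf a}_m^*X{\mathbf a}_m)$. Let $k\ge1$ and $a>0$ be such that $ak$ is a positive integer, and suppose $\mathcal{A}$ satisfies the restricted isometry property of order $(2,2ak)$ with constants $c,C>0$ satisfying \[ c-\frac{4C}{\sqrt a}-\frac{C}{a}>0 . \] Let ${\mathbf x}_0\in\mathbb{C}^n$ be nonzero with $\|{\mathbf x}_0\|_0\le k$, let $\epsilon\ge 0$, and let ${\mathbf y}=\mathcal{A}({\mathbf x}_0{\mathbf x}_0^* )+{\mathbf w}$ with ${\mathbf w}\in\mathbb{R}^m$, $\|{\mathbf w}\|_2\le\epsilon$. Let ${\mathbf x}^\#$ be any solution of \[ \min_{{\mathbf x}\in\mathbb{C}^n}\|{\mathbf x}\|_1\quad\text{s.t.}\quad \|\mathcal{A}({\mathbf x}{\mathbf x}^* )-{\mathbf y}\|_2\le\epsilon . \] Then, with \[ C_1=\frac{\frac1a+\frac{4}{\sqrt a}+1}{c-\frac{4C}{\sqrt a}-\frac{C}{a}}, \] we have \[ \|{\mathbf x}^\#({\mathbf x}^\#)^*-{\mathbf x}_0{\mathbf x}_0^*\|_F\le C_1\frac{2\epsilon}{\sqrt m}, \] and \[ \min_{\gamma\in\mathbb{C},|\gamma|=1}\|\gamma{\mathbf x}^\#-{\mathbf x}_0\|_2\le\min\Big\{\frac{2\sqrt2\,C_1\,\epsilon}{\sqrt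 m\,\|{\mathbf x}_0\|_2},\; 2\sqrt{2\sqrt2\,C_1}\,\sqrt{\epsilon}\,(n/m)^{1/4}\Big\}. \]
   Context: $\mathbb{H}^{n\times n}$ denotes the set of $n\times n$ complex Hermitian matrices. $\|{\mathbf x}\|_0$ is the number of nonzero entries of ${\mathbf x}$. $\|X\|_{0,2}$ denotes the number of nonzero rows of $X$. $\|X\|_F$ is the Frobenius norm. A linear map $\mathcal{A}:\mathbb{H}^{n\times n}\to\mathbb{R}^m$ satisfies the restricted isometry property of order $(r,k)$ with constants $0<c\le C$ if $c\|X\|_F\le \frac1m\|\mathcal{A}(X)\|_1\le C\|X\|_F$ for all $X\in\mathbb{H}^{n\times n}$ with $\operatorname{rank}(X)\le r$ and $\|X\|_{0,2}\le k$. *)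

(* complex numbers as an arbitrary numClosedFieldType C
   (e.g. algC); real quantities are elements of C with Num.real. *)
From HB Require Import structures.
From mathcomp Require Import all_boot all_order all_algebra.
Set Implicit Arguments. Unset Strict Implicit. Unset Printing Implicit Defensive.
Import Order.TTheory GRing.Theory Num.Theory.
Local Open Scope ring_scope.

Section Defs.
Variable C : numClosedFieldType.

Definition adjmx (p q : nat) (X : 'M[C]_(p, q)) : 'M[C]_(q, p) :=
  map_mx Num.conj X^T.

Definition hermitian (n : nat) (X : 'M[C]_n) : Prop := adjmx X = X.

Definition l0norm (n : nat) (x : 'cV[C]_n) : nat := #|[set i | x i 0 != 0]|.

Definition nzrows (n : nat) (X : 'M[C]_n) : nat := #|[set i | row i X != 0]|.

Definition l1norm (n : nat) (x : 'cV[C]_n) : C := \sum_i `|x i 0|.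
Definition l2norm (n : nat) (x : 'cV[C]_n) : C := sqrtC (\sum_i `|x i 0| ^+ 2).
Definition frob (n : nat) (X : 'M[C]_n) : C :=
  sqrtC (\sum_i \sum_j `|X i j| ^+ 2).

Definition measure (n m : nat) (av : 'I_m -> 'cV[C]_n) (X : 'M[C]_n) : 'cV[C]_m :=
  \col_j (adjmx (av j) *m X *m av j) 0 0.

Definition outer (n : nat) (x : 'cV[C]_n) : 'M[C]_n := x *m adjmx x.

Definition RIP (n m : nat) (av : 'I_m -> 'cV[C]_n) (r k : nat) (c Cc : C) : Prop :=
  forall X : 'M[C]_n, hermitian X -> (\rank X <= r)%N -> (nzrows X <= k)%N ->
    c * frob X <= (m%:R)^-1 * l1norm (measure av X) /\
    (m%:R)^-1 * l1norm (measure av X) <= Cc * frob X.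

Definition feasible (n m : nat) (av : 'I_m -> 'cV[C]_n) (y : 'cV[C]_m) (eps : C)
  (x : 'cV[C]_n) : Prop := l2norm (measure av (outer x) - y) <= eps.

End Defs.

(* Let [T] be the support of [x0] and [H = xs xs^* - x0 x0^*]. Sort the entries of [xs] off [T]
   by decreasing modulus and cut them into blocks of size [s = a k]; every entry of a block is
   dominated by the mean of the previous one, so the l2 norms of the blocks after the first sum to
   at most [||xs_{T^c}||_1 / sqrt s], and l1-minimality bounds [||xs_{T^c}||_1] by the l1 error
   on [T]. Expanding [H] accordingly, its head (supported on [T] and the first block) obeys the
   lower RIP bound, while the remaining rank-two cross terms cost, through the upper bound, at most
   [(4 / sqrt a + 1 / a)] times the head; this gives [||H||_F <= C1 m^-1 ||A(H)||_1], and
   feasibility of [x0] bounds [||A(H)||_1] by [2 sqrt m eps]. Finally, for [gamma] the phase of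
   [<xs, x0>] one has [||gamma xs - x0||^2 (||xs||^2 + ||x0||^2) <= 2 ||H||_F^2], which yields both
   bounds on the vector error. *)

From Pilot Require Import Defs.
From HB Require Import structures.
From mathcomp Require Import all_boot all_order all_algebra.
From mathcomp Require Import ring.
Import Order.TTheory GRing.Theory Num.Theory.
Set Implicit Arguments. Unset Strict Implicit. Unset Printing Implicit Defensive.
Local Open Scope ring_scope.

Section NumInequalities.
Variable R : numFieldType.
Implicit Types x y : R.

Lemma real_mulr2_le_sqrD x y : x \is Num.real -> y \is Num.real ->
  2 * (x * y) <= x ^+ 2 + y ^+ 2.
Proof.
move=> xr yr; rewrite -subr_ge0.
have -> : x ^+ 2 + y ^+ 2 - 2 * (x * y) = (x - y) ^+ 2 by rewrite sqrrB; ring.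
by rewrite -real_normK ?rpredB // exprn_ge0.
Qed.

Lemma ler_sqr x y : 0 <= x -> x <= y -> x ^+ 2 <= y ^+ 2.
Proof. by move=> x0 xy; rewrite ler_pXn2r // nnegrE // (le_trans x0 xy). Qed.

Variable I : finType.
Implicit Types (P : pred I) (f g : I -> R).

Lemma ler_sum_subset (A B : {pred I}) f : (forall i, 0 <= f i) -> {subset A <= B} ->
  \sum_(i in A) f i <= \sum_(i in B) f i.
Proof.
move=> f0 sAB; rewrite [X in X <= _]big_mkcond [X in _ <= X]big_mkcond /=.
by apply: ler_sum => i _; case: ifP => [/sAB -> //|_]; case: ifP.
Qed.

(* After symmetrization it reduces to [2 (f i g j) (f j g i) <= (f i g j)^2 + (f j g i)^2]. *)
Lemma real_CauchySchwarz P f g :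
  (forall i, f i \is Num.real) -> (forall i, g i \is Num.real) ->
  (\sum_(i | P i) f i * g i) ^+ 2 <=
  (\sum_(i | P i) f i ^+ 2) * (\sum_(i | P i) g i ^+ 2).
Proof.
move=> fr gr.
have -> : (\sum_(i | P i) f i * g i) ^+ 2 =
          \sum_(i | P i) \sum_(j | P j) (f i * g j) * (f j * g i).
  rewrite expr2 mulr_suml; apply: eq_bigr => i _; rewrite mulr_sumr.
  by apply: eq_bigr => j _; ring.
have E : (\sum_(i | P i) f i ^+ 2) * (\sum_(j | P j) g j ^+ 2) =
         \sum_(i | P i) \sum_(j | P j) (f i * g j) ^+ 2.
  rewrite mulr_suml; apply: eq_bigr => i _; rewrite mulr_sumr.
  by apply: eq_bigr => j _; rewrite exprMn.
have E' : (\sum_(i | P i) f i ^+ 2) * (\sum_(j | P j) g j ^+ 2) =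
          \sum_(i | P i) \sum_(j | P j) (f j * g i) ^+ 2.
  by rewrite E exchange_big.
rewrite -[X in _ <= X]mulr1 -[1 : R](@divff _ 2) ?pnatr_eq0 //.
rewrite mulrA mulr_natr mulr2n {1}E E' -big_split /= mulr_suml.
apply: ler_sum => i _; rewrite -big_split /= mulr_suml; apply: ler_sum => j _.
by rewrite ler_pdivlMr ?ltr0n // mulrC real_mulr2_le_sqrD ?rpredM.
Qed.

End NumInequalities.

Section SqrtC.
Variable C : numClosedFieldType.
Implicit Types x y : C.

Lemma le_sqrtC x y : 0 <= x -> x <= y -> sqrtC x <= sqrtC y.
Proof. by move=> x0 xy; rewrite ler_sqrtC // nnegrE // (le_trans x0 xy). Qed.

Lemma sqrtC_le x y : 0 <= x -> 0 <= y -> x <= y ^+ 2 -> sqrtC x <= y.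
Proof. by move=> x0 y0 h; rewrite -(sqrCK y0); apply: le_sqrtC. Qed.

Lemma le_sqrtC_sqr x y : 0 <= x -> x ^+ 2 <= y -> x <= sqrtC y.
Proof. by move=> x0 h; rewrite -(sqrCK x0) le_sqrtC ?exprn_ge0. Qed.

Lemma sqrtCM_nneg x y : 0 <= x -> 0 <= y -> sqrtC (x * y) = sqrtC x * sqrtC y.
Proof. by move=> x0 y0; rewrite sqrtCM // nnegrE. Qed.

Lemma le_sqrtCM_of_sqr x y c : 0 <= x -> 0 <= y -> 0 <= c ->
  x ^+ 2 <= c * y ^+ 2 -> x <= sqrtC c * y.
Proof.
move=> x0 y0 c0 h.
by rewrite -(ler_pXn2r (n := 2)) ?nnegrE ?mulr_ge0 ?sqrtC_ge0 // exprMn sqrtCK.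
Qed.

Variable I : finType.
Implicit Types (P : pred I) (f g : I -> C).

Lemma sum_normM_le P f g :
  \sum_(i | P i) `|f i| * `|g i| <=
  sqrtC (\sum_(i | P i) `|f i| ^+ 2) * sqrtC (\sum_(i | P i) `|g i| ^+ 2).
Proof.
rewrite -sqrtCM_nneg ?sumr_ge0 // => [|i _|i _]; rewrite ?exprn_ge0 //.
apply: le_sqrtC_sqr; first by rewrite sumr_ge0 // => i _; rewrite mulr_ge0.
by apply: real_CauchySchwarz => i; apply: ger0_real.
Qed.

Lemma sum_norm_le_sqrt_card P f :
  \sum_(i | P i) `|f i| <= sqrtC (#|P|%:R) * sqrtC (\sum_(i | P i) `|f i| ^+ 2).
Proof.
have := sum_normM_le P (fun _ => 1) f.
have -> : \sum_(i | P i) `|(fun=> 1 : C) i| ^+ 2 = #|P|%:R.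
  by rewrite (eq_bigr (fun _ => 1)) ?sumr_const // => i _; rewrite normr1 expr1n.
by under eq_bigr do rewrite normr1 mul1r.
Qed.

Lemma sqrt_sum_sqr_normD P f g :
  sqrtC (\sum_(i | P i) `|f i + g i| ^+ 2) <=
  sqrtC (\sum_(i | P i) `|f i| ^+ 2) + sqrtC (\sum_(i | P i) `|g i| ^+ 2).
Proof.
set A := \sum_(i | P i) `|f i| ^+ 2; set B := \sum_(i | P i) `|g i| ^+ 2.
have sumX2_ge0 (h : I -> C) : 0 <= \sum_(i | P i) `|h i| ^+ 2.
  by rewrite sumr_ge0 // => i _; rewrite exprn_ge0.
apply: sqrtC_le; rewrite ?sumX2_ge0 ?addr_ge0 ?sqrtC_ge0 ?sumX2_ge0 //.
rewrite sqrrD !sqrtCK.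
apply: (@le_trans _ _ (\sum_(i | P i) (`|f i| + `|g i|) ^+ 2)).
  by apply: ler_sum => i _; apply: ler_sqr => //; exact: ler_normD.
have -> : \sum_(i | P i) (`|f i| + `|g i|) ^+ 2 =
          A + B + 2 * \sum_(i | P i) `|f i| * `|g i|.
  rewrite /A /B -big_split /= mulr_sumr -big_split /=; apply: eq_bigr => i _.
  by rewrite sqrrD; ring.
rewrite [X in _ <= X]addrAC lerD2l -[X in _ <= X]mulr_natl.
by rewrite ler_pM2l ?ltr0n // sum_normM_le.
Qed.

End SqrtC.

Lemma ler_subadd_sum (V : nmodType) (C : numDomainType) (phi : V -> C)
    (I : Type) (r : seq I) (P : pred I) (F : I -> V) :
  phi 0 = 0 -> (forall x y, phi (x + y) <= phi x + phi y) ->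
  phi (\sum_(i <- r | P i) F i) <= \sum_(i <- r | P i) phi (F i).
Proof.
move=> phi0 phiD; elim/big_rec2: _ => [|i y1 y2 _ h]; first by rewrite phi0.
by apply: le_trans (phiD _ _) _; rewrite lerD2l.
Qed.

Section Adjoint.
Variable C : numClosedFieldType.

Lemma adjmxE p q (X : 'M[C]_(p, q)) i j : adjmx X i j = (X j i)^*.
Proof. by rewrite !mxE. Qed.

Lemma adjmxD p q (X Y : 'M[C]_(p, q)) : adjmx (X + Y) = adjmx X + adjmx Y.
Proof. by apply/matrixP => i j; rewrite !(mxE, adjmxE) rmorphD. Qed.

Lemma adjmxN p q (X : 'M[C]_(p, q)) : adjmx (- X) = - adjmx X.
Proof. by apply/matrixP => i j; rewrite !(mxE, adjmxE) rmorphN. Qed.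

Lemma adjmx0 p q : adjmx (0 : 'M[C]_(p, q)) = 0.
Proof. by apply/matrixP => i j; rewrite !(mxE, adjmxE) rmorph0. Qed.

Lemma adjmxZ p q (t : C) (X : 'M[C]_(p, q)) : adjmx (t *: X) = t^* *: adjmx X.
Proof. by apply/matrixP => i j; rewrite !(mxE, adjmxE) rmorphM. Qed.

Lemma adjmxK p q (X : 'M[C]_(p, q)) : adjmx (adjmx X) = X.
Proof. by apply/matrixP => i j; rewrite !adjmxE conjCK. Qed.

Lemma adjmxM p q r (X : 'M[C]_(p, q)) (Y : 'M[C]_(q, r)) :
  adjmx (X *m Y) = adjmx Y *m adjmx X.
Proof.
apply/matrixP => i j; rewrite !(mxE, adjmxE) rmorph_sum; apply: eq_bigr => l _.
by rewrite !adjmxE rmorphM mulrC.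
Qed.

Lemma adjmx_sum p q (I : Type) (r : seq I) (P : pred I) (F : I -> 'M[C]_(p, q)) :
  adjmx (\sum_(i <- r | P i) F i) = \sum_(i <- r | P i) adjmx (F i).
Proof. exact: (big_morph _ (@adjmxD p q) (@adjmx0 p q)). Qed.

Lemma mul_adjmxE n (x y : 'cV[C]_n) i j : (x *m adjmx y) i j = x i 0 * (y j 0)^*.
Proof. by rewrite !mxE big_ord1 adjmxE. Qed.

End Adjoint.

Section Norms.
Variables (C : numClosedFieldType) (n : nat).
Implicit Types (x y : 'cV[C]_n) (X Y : 'M[C]_n).

Lemma frob_ge0 X : 0 <= frob X.
Proof. by rewrite sqrtC_ge0 sumr_ge0 // => i _; rewrite sumr_ge0 // => j _; rewrite exprn_ge0. Qed.

Lemma l2norm_ge0 x : 0 <= l2norm x.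
Proof. by rewrite sqrtC_ge0 sumr_ge0 // => i _; rewrite exprn_ge0. Qed.

Lemma l2norm_eq0 x : (l2norm x == 0) = (x == 0).
Proof.
rewrite sqrtC_eq0 psumr_eq0 => [|i _]; last exact: exprn_ge0.
apply/idP/eqP => [/allP x0|->].
  apply/matrixP => i j; rewrite (ord1 j) mxE; apply/eqP.
  by have := x0 i (mem_index_enum i); rewrite expf_eq0 normr_eq0.
by apply/allP => i _; rewrite /= sqrf_eq0 normr_eq0 mxE.
Qed.

Lemma l2norm_gt0 x : x != 0 -> 0 < l2norm x.
Proof. by rewrite lt_def l2norm_eq0 l2norm_ge0 andbT. Qed.

Lemma frob_pairE X : frob X = sqrtC (\sum_(p : 'I_n * 'I_n) `|X p.1 p.2| ^+ 2).
Proof. by rewrite /frob pair_bigA. Qed.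

Lemma frobD X Y : frob (X + Y) <= frob X + frob Y.
Proof.
rewrite !frob_pairE; under eq_bigr do rewrite mxE.
exact: sqrt_sum_sqr_normD.
Qed.

Lemma frob0 : frob (0 : 'M[C]_n) = 0.
Proof.
rewrite /frob big1 ?sqrtC0 // => i _; rewrite big1 // => j _.
by rewrite mxE normr0 expr0n.
Qed.

Lemma frob_mul_adjmx x y : frob (x *m adjmx y) = l2norm x * l2norm y.
Proof.
rewrite /frob /l2norm -sqrtCM_nneg ?sumr_ge0 // => [|i _|i _]; rewrite ?exprn_ge0 //.
congr sqrtC; rewrite mulr_suml; apply: eq_bigr => i _; rewrite mulr_sumr.
by apply: eq_bigr => j _; rewrite mul_adjmxE normrM norm_conjC exprMn.
Qed.

Lemma frob_outer x : frob (outer x) = l2norm x ^+ 2.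
Proof. by rewrite frob_mul_adjmx expr2. Qed.

Lemma l2normD x y : l2norm (x + y) <= l2norm x + l2norm y.
Proof. by rewrite /l2norm; under eq_bigr do rewrite mxE; exact: sqrt_sum_sqr_normD. Qed.

Lemma l2normN x : l2norm (- x) = l2norm x.
Proof. by rewrite /l2norm; under eq_bigr do rewrite mxE normrN. Qed.

Lemma l2normZ (t : C) x : l2norm (t *: x) = `|t| * l2norm x.
Proof.
rewrite /l2norm; under eq_bigr do rewrite mxE normrM exprMn.
by rewrite -mulr_sumr sqrtCM_nneg ?exprn_ge0 ?sqrCK ?sumr_ge0 // => i _; rewrite exprn_ge0.
Qed.

Lemma l1normD x y : l1norm (x + y) <= l1norm x + l1norm y.
Proof. by rewrite /l1norm -big_split ler_sum // => i _; rewrite mxE ler_normD. Qed.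

Lemma l1norm0 : l1norm (0 : 'cV[C]_n) = 0.
Proof. by rewrite /l1norm big1 // => i _; rewrite mxE normr0. Qed.

Lemma l1normN x : l1norm (- x) = l1norm x.
Proof. by rewrite /l1norm; under eq_bigr do rewrite mxE normrN. Qed.

End Norms.

Section Measurements.
Variables (C : numClosedFieldType) (n m : nat) (av : 'I_m -> 'cV[C]_n).
Implicit Types (X Y : 'M[C]_n).

Lemma measureE X j k : measure av X j k = (adjmx (av j) *m X *m av j) 0 0.
Proof. by rewrite mxE. Qed.

Lemma measureD X Y : measure av (X + Y) = measure av X + measure av Y.
Proof. by apply/matrixP => i j; rewrite [in RHS]mxE !measureE mulmxDr mulmxDl mxE. Qed.

Lemma measure0 : measure av 0 = 0.
Proof. by apply/matrixP => i j; rewrite measureE mulmx0 mul0mx !mxE. Qed.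

Lemma measureN X : measure av (- X) = - measure av X.
Proof.
apply/matrixP => i j.
by rewrite [in RHS]mxE !measureE -scaleN1r -scalemxAr -scalemxAl mxE mulN1r.
Qed.

Lemma measureB X Y : measure av (X - Y) = measure av X - measure av Y.
Proof. by rewrite measureD measureN. Qed.

Definition meas_avg X : C := m%:R^-1 * l1norm (measure av X).

Lemma meas_avg0 : meas_avg 0 = 0.
Proof. by rewrite /meas_avg measure0 l1norm0 mulr0. Qed.

Lemma meas_avgD X Y : meas_avg (X + Y) <= meas_avg X + meas_avg Y.
Proof. by rewrite /meas_avg -mulrDr ler_wpM2l ?invr_ge0 ?ler0n // measureD l1normD. Qed.

Lemma meas_avgN X : meas_avg (- X) = meas_avg X.
Proof. by rewrite /meas_avg measureN l1normN. Qed.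

End Measurements.

Section OuterProducts.
Variables (C : numClosedFieldType) (n : nat).
Implicit Types (x y z : 'cV[C]_n) (S : {set 'I_n}).

Definition sym x y : 'M[C]_n := x *m adjmx y + y *m adjmx x.

Definition supported S x : Prop := forall i, i \notin S -> x i 0 = 0.

Lemma supported_sub S S' x : S \subset S' -> supported S x -> supported S' x.
Proof. by move=> /subsetP sSS' hx i iS'; apply: hx; apply: contra iS'; apply: sSS'. Qed.

Lemma hermitian_sym x y : Defs.hermitian (sym x y).
Proof. by rewrite /Defs.hermitian adjmxD !adjmxM !adjmxK addrC. Qed.

Lemma hermitian_outerB x y : Defs.hermitian (outer x - outer y).
Proof. by rewrite /Defs.hermitian adjmxD adjmxN !adjmxM !adjmxK. Qed.

Lemma rank_mul_adjmxD x y x' y' : (\rank (x *m adjmx y + x' *m adjmx y')%R <= 2)%N.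
Proof.
apply: leq_trans (mxrank_add _ _) _.
have rk1 (a b : 'cV[C]_n) : (\rank (a *m adjmx b) <= 1)%N.
  exact: leq_trans (mxrankM_maxl _ _) (rank_leq_col _).
by rewrite -[2%N]/(1 + 1)%N leq_add.
Qed.

Lemma nzrows_mul_adjmxD S x y x' y' : supported S x -> supported S x' ->
  (nzrows (x *m adjmx y + x' *m adjmx y') <= #|S|)%N.
Proof.
move=> hx hx'; apply/subset_leq_card/subsetP => i; rewrite inE.
apply: contraR => iS; apply/eqP/rowP => j.
by rewrite mxE [X in X = _]mxE !mul_adjmxE hx // hx' // !mul0r addr0 mxE.
Qed.

Lemma outerD x y : outer (x + y) = outer x + sym x y + outer y.
Proof. by rewrite /outer /sym adjmxD mulmxDl !mulmxDr !addrA. Qed.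

Lemma sym_addl x y z : sym (x + y) z = sym x z + sym y z.
Proof.
rewrite /sym adjmxD mulmxDl mulmxDr !addrA; congr (_ + _).
by rewrite addrAC.
Qed.

Lemma sym_sumr x (I : Type) (r : seq I) (P : pred I) (F : I -> 'cV[C]_n) :
  sym x (\sum_(i <- r | P i) F i) = \sum_(i <- r | P i) sym x (F i).
Proof. by rewrite /sym adjmx_sum mulmx_sumr mulmx_suml -big_split. Qed.

(* Each cross term [F i (F j)^*] is split evenly between [sym (F i / 2) (F j)]
   and [sym (F j / 2) (F i)]. *)
Lemma outer_sum N (F : 'I_N -> 'cV[C]_n) :
  outer (\sum_(j < N) F j) = \sum_(i < N) \sum_(j < N) sym (2^-1 *: F i) (F j).
Proof.
have E : outer (\sum_(j < N) F j) = \sum_(i < N) \sum_(j < N) F i *m adjmx (F j).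
  rewrite /outer adjmx_sum mulmx_suml; apply: eq_bigr => i _.
  by rewrite mulmx_sumr.
have half_real : (2^-1 : C)^* = 2^-1 by rewrite fmorphV /= conjC_nat.
rewrite E /sym.
under [RHS]eq_bigr do under eq_bigr do
  rewrite adjmxZ half_real -scalemxAl -scalemxAr -scalerDr.
under [RHS]eq_bigr do rewrite -scaler_sumr big_split /=.
rewrite -scaler_sumr big_split /= -E [X in _ = _ *: (_ + X)]exchange_big /= -E.
by rewrite -mulr2n -scaler_nat scalerA mulVf ?pnatr_eq0 // scale1r.
Qed.

Lemma frob_sym x y : frob (sym x y) <= 2 * (l2norm x * l2norm y).
Proof.
apply: le_trans (frobD _ _) _; rewrite !frob_mul_adjmx [l2norm y * _]mulrC.
by rewrite mulr2n mulrDl mul1r.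
Qed.

Lemma frob_outerB x y : frob (outer x - outer y) <= l2norm x ^+ 2 + l2norm y ^+ 2.
Proof.
apply: le_trans (frobD _ _) _.
have frobN X : frob (- X) = frob X.
  by rewrite /frob; under eq_bigr do under eq_bigr do rewrite mxE normrN.
by rewrite frobN !frob_outer.
Qed.

Definition restrict S x : 'cV[C]_n := \col_i (if i \in S then x i 0 else 0).

Lemma restrictE S x i : restrict S x i 0 = if i \in S then x i 0 else 0.
Proof. by rewrite mxE. Qed.

Lemma supported_restrict S x : supported S (restrict S x).
Proof. by move=> i /negbTE iS; rewrite restrictE iS. Qed.

Lemma l2norm_restrict S x : l2norm (restrict S x) = sqrtC (\sum_(i in S) `|x i 0| ^+ 2).
Proof.
rewrite /l2norm [in RHS]big_mkcond /=; congr sqrtC; apply: eq_bigr => i _.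
by rewrite restrictE; case: ifP => //; rewrite normr0 expr0n.
Qed.

End OuterProducts.

Section RIPConsequences.
Variables (C : numClosedFieldType) (n m : nat) (av : 'I_m -> 'cV[C]_n).
Variables (K : nat) (c Cc : C) (S : {set 'I_n}) (x y : 'cV[C]_n).
Hypotheses (rip : RIP av 2 K c Cc) (cardS : (#|S| <= K)%N).
Hypotheses (supp_x : supported S x) (supp_y : supported S y).

Lemma RIP_sym : 0 <= Cc -> meas_avg av (sym x y) <= Cc * (2 * (l2norm x * l2norm y)).
Proof.
move=> Cc0; have [_ ub] := rip (hermitian_sym x y) (rank_mul_adjmxD _ _ _ _)
  (leq_trans (nzrows_mul_adjmxD _ _ supp_x supp_y) cardS).
exact: le_trans ub (ler_wpM2l Cc0 (frob_sym x y)).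
Qed.

Lemma RIP_outerB :
  c * frob (outer x - outer y) <= meas_avg av (outer x - outer y) /\
  meas_avg av (outer x - outer y) <= Cc * frob (outer x - outer y).
Proof.
have E : outer x - outer y = x *m adjmx x + (- y) *m adjmx y by rewrite /outer mulNmx.
have supp_Ny : supported S (- y) by move=> i iS; rewrite mxE supp_y ?oppr0.
apply: rip (hermitian_outerB x y) _ _; rewrite E ?rank_mul_adjmxD //.
exact: leq_trans (nzrows_mul_adjmxD _ _ supp_x supp_Ny) cardS.
Qed.

End RIPConsequences.

Section PhaseAlignment.
Variables (C : numClosedFieldType) (n : nat).
Implicit Types (x y : 'cV[C]_n).

Definition dotv x y : C := \sum_i (x i 0)^* * y i 0.

Lemma l2norm_sqrE x : l2norm x ^+ 2 = \sum_i `|x i 0| ^+ 2.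
Proof. by rewrite sqrtCK. Qed.

Lemma frob_sqrE (X : 'M[C]_n) : frob X ^+ 2 = \sum_i \sum_j `|X i j| ^+ 2.
Proof. by rewrite sqrtCK. Qed.

Lemma sum_conjMl x : \sum_i x i 0 * (x i 0)^* = l2norm x ^+ 2.
Proof. by rewrite l2norm_sqrE; apply: eq_bigr => i _; rewrite normCK. Qed.

Lemma sum_conjMr x : \sum_i (x i 0)^* * x i 0 = l2norm x ^+ 2.
Proof. by rewrite l2norm_sqrE; apply: eq_bigr => i _; rewrite normCKC. Qed.

Lemma conj_dotv x y : (dotv x y)^* = \sum_i x i 0 * (y i 0)^*.
Proof. by rewrite rmorph_sum; apply: eq_bigr => i _; rewrite rmorphM /= conjCK mulrC. Qed.

Lemma frob_outerB_sqr x y :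
  frob (outer x - outer y) ^+ 2 =
  (l2norm x ^+ 2) ^+ 2 + (l2norm y ^+ 2) ^+ 2 - 2 * `|dotv x y| ^+ 2.
Proof.
have entry i j : `|(outer x - outer y) i j| ^+ 2 =
    (x i 0 * (x i 0)^*) * ((x j 0)^* * x j 0) - (x i 0 * (y i 0)^*) * ((x j 0)^* * y j 0)
    - (y i 0 * (x i 0)^*) * ((y j 0)^* * x j 0) + (y i 0 * (y i 0)^*) * ((y j 0)^* * y j 0).
  rewrite normCK mxE [X in _ + X]mxE /outer !mul_adjmxE rmorphB !rmorphM /= !conjCK.
  by ring.
rewrite frob_sqrE; under eq_bigr do under eq_bigr do rewrite entry.
under eq_bigr do rewrite big_split /= !sumrB.
rewrite big_split /= !sumrB -!big_distrlr !sum_conjMl !sum_conjMr -conj_dotv -/(dotv x y).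
have -> : \sum_i y i 0 * (x i 0)^* = dotv x y by apply: eq_bigr => i _; rewrite mulrC.
have -> : \sum_i (y i 0)^* * x i 0 = (dotv x y)^*.
  by rewrite conj_dotv; apply: eq_bigr => i _; rewrite mulrC.
by rewrite /= normCK; ring.
Qed.

Lemma unit_phase (z : C) : exists g : C, [/\ `|g| = 1, g * z^* = `|z| & g^* * z = `|z|].
Proof.
have [->|z0] := eqVneq z 0.
  by exists 1; rewrite normr1 conjC0 !mulr0 normr0.
have nz : `|z| != 0 by rewrite normr_eq0.
exists (z / `|z|); split; first by rewrite normrM normfV normr_id divff.
  by rewrite mulrAC -normCK expr2 mulrK // unitfE.
by rewrite rmorphM fmorphV /= conj_normC mulrAC -normCKC expr2 mulrK // unitfE.
Qed.

(* Taking for [g] the phase of [<x, y>] and writing [p = |x|^2], [q = |y|^2], [r = |<x, y>|],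
   one gets [D^2 = p + q - 2 r] and [F^2 = p^2 + q^2 - 2 r^2], whence
   [2 F^2 - D^2 (p + q) = (p - q)^2 + 2 r D^2 >= 0]. *)
Lemma phase_align x y : exists2 g : C, `|g| = 1 &
  l2norm (g *: x - y) ^+ 2 * (l2norm x ^+ 2 + l2norm y ^+ 2) <=
  2 * frob (outer x - outer y) ^+ 2.
Proof.
have [g [g1 gz gz']] := unit_phase (dotv x y).
exists g => //.
set p := l2norm x ^+ 2; set q := l2norm y ^+ 2; set r := `|dotv x y|.
have D2E : l2norm (g *: x - y) ^+ 2 = p + q - 2 * r.
  rewrite l2norm_sqrE.
  have entry i : `|(g *: x - y) i 0| ^+ 2 = (g * g^*) * (x i 0 * (x i 0)^*)
      - g * (x i 0 * (y i 0)^*) - g^* * ((x i 0)^* * y i 0) + y i 0 * (y i 0)^*.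
    by rewrite !mxE normCK rmorphB rmorphM; ring.
  under eq_bigr do rewrite entry.
  rewrite big_split /= !sumrB -!mulr_sumr sum_conjMl sum_conjMl -conj_dotv.
  by rewrite -normCK g1 expr1n mul1r gz gz' -/p -/q -/r; ring.
have D20 : 0 <= p + q - 2 * r by rewrite -D2E exprn_ge0 ?l2norm_ge0.
rewrite D2E frob_outerB_sqr -/p -/q -/r -subr_ge0.
have -> : 2 * (p ^+ 2 + q ^+ 2 - 2 * r ^+ 2) - (p + q - 2 * r) * (p + q) =
          (p - q) ^+ 2 + 2 * r * (p + q - 2 * r) by ring.
apply: addr_ge0; last by rewrite !mulr_ge0 ?normr_ge0.
by rewrite -real_normK ?exprn_ge0 // rpredB // ger0_real // exprn_ge0 ?l2norm_ge0.
Qed.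

Section Aligned.
Variables (x y : 'cV[C]_n) (g : C).
Hypothesis aligned : l2norm (g *: x - y) ^+ 2 * (l2norm x ^+ 2 + l2norm y ^+ 2) <=
  2 * frob (outer x - outer y) ^+ 2.

Lemma aligned_mull : l2norm (g *: x - y) * l2norm x <= sqrtC 2 * frob (outer x - outer y).
Proof.
rewrite le_sqrtCM_of_sqr ?mulr_ge0 ?l2norm_ge0 ?frob_ge0 ?ler0n // exprMn.
by apply: le_trans aligned; rewrite ler_wpM2l ?exprn_ge0 ?l2norm_ge0 // lerDl exprn_ge0 ?l2norm_ge0.
Qed.

Lemma aligned_mulr : l2norm (g *: x - y) * l2norm y <= sqrtC 2 * frob (outer x - outer y).
Proof.
rewrite le_sqrtCM_of_sqr ?mulr_ge0 ?l2norm_ge0 ?frob_ge0 ?ler0n // exprMn.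
by apply: le_trans aligned; rewrite ler_wpM2l ?exprn_ge0 ?l2norm_ge0 // lerDr exprn_ge0 ?l2norm_ge0.
Qed.

Lemma aligned_sqr : y != 0 -> l2norm (g *: x - y) ^+ 2 <= 2 * frob (outer x - outer y).
Proof.
move=> y0.
have pq0 : 0 < l2norm x ^+ 2 + l2norm y ^+ 2.
  by rewrite ltr_wpDl ?exprn_ge0 ?l2norm_ge0 // exprn_gt0 // l2norm_gt0.
rewrite -(ler_pM2r pq0); apply: le_trans aligned _.
by rewrite expr2 -mulrA ler_wpM2l ?ler0n // ler_wpM2l ?frob_ge0 // frob_outerB.
Qed.

End Aligned.

End PhaseAlignment.

Section Blocks.
Variables (C : numClosedFieldType) (n s : nat) (f : 'I_n -> C) (T : {set 'I_n}).
Hypotheses (f_ge0 : forall i, 0 <= f i) (s_gt0 : (0 < s)%N).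

Definition tail_order := sort (fun i j => f j <= f i) (enum (~: T)).

Definition block_of i := (index i tail_order %/ s)%N.

Definition block j := [set i | (i \notin T) && (block_of i == j)].

Lemma mem_tail_order i : (i \in tail_order) = (i \notin T).
Proof. by rewrite mem_sort mem_enum inE. Qed.

Lemma uniq_tail_order : uniq tail_order.
Proof. by rewrite sort_uniq enum_uniq. Qed.

Lemma size_tail_order : (size tail_order <= n)%N.
Proof. by rewrite size_sort -cardE (leq_trans (max_card _)) // card_ord. Qed.

Lemma block_of_lt i : i \notin T -> (block_of i < n)%N.
Proof.
move=> iT; apply: leq_ltn_trans (leq_div _ _) _.
by apply: leq_trans size_tail_order; rewrite index_mem mem_tail_order.
Qed.

Lemma sum_block (F : 'I_n -> C) :
  \sum_(j < n) \sum_(i in block j) F i = \sum_(i | i \notin T) F i.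
Proof.
under eq_bigr do rewrite big_mkcond.
rewrite exchange_big /= [RHS]big_mkcond /=; apply: eq_bigr => l _.
have [lT|lT] := boolP (l \in T); first by rewrite big1 // => j _; rewrite inE lT.
rewrite (bigD1 (Ordinal (block_of_lt lT))) //= inE lT eqxx /= big1 ?addr0 // => j /eqP nj.
rewrite inE lT /=; case: eqP => // bj.
by case: nj; apply: val_inj; rewrite /= bj.
Qed.

Lemma nth_block j (p : 'I_s) i0 :
  (j * s + p < size tail_order)%N -> nth i0 tail_order (j * s + p) \in block j.
Proof.
move=> lt_size; rewrite inE -mem_tail_order mem_nth //= /block_of.
by rewrite index_uniq ?uniq_tail_order // divnMDl // divn_small // addn0.
Qed.

Lemma card_block j : (#|block j| <= s)%N.
Proof.
have [->|[i0 _]] := set_0Vmem (block j); first by rewrite cards0.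
pose g (p : 'I_s) := nth i0 tail_order (j * s + p).
have card_img : (#|[set g p | p in 'I_s]| <= s)%N.
  by rewrite (leq_trans (leq_imset_card _ _)) ?card_ord.
apply: leq_trans card_img.
apply/subset_leq_card/subsetP => l; rewrite inE => /andP [lT /eqP lj].
apply/imsetP; exists (Ordinal (ltn_pmod (index l tail_order) s_gt0)) => //.
by rewrite /g /= -lj -divn_eq nth_index ?mem_tail_order.
Qed.

Lemma block_succ_le j i : i \in block j.+1 -> s%:R * f i <= \sum_(l in block j) f l.
Proof.
rewrite inE => /andP [iT /eqP bi].
have iL : i \in tail_order by rewrite mem_tail_order.
have jq : (j.+1 * s <= index i tail_order)%N by rewrite -bi leq_divM.
pose g (p : 'I_s) := nth i tail_order (j * s + p).
have g_lt (p : 'I_s) : (j * s + p < j.+1 * s)%N by rewrite mulSn addnC ltn_add2r.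
have g_size (p : 'I_s) : (j * s + p < size tail_order)%N.
  by rewrite (leq_trans (g_lt p)) // (leq_trans jq) // ltnW // index_mem.
have g_inj : {in [set: 'I_s] &, injective g}.
  move=> p p' _ _ /eqP; rewrite /g nth_uniq ?g_size ?uniq_tail_order // eqn_add2l.
  by move=> /eqP /val_inj.
have -> : s%:R * f i = \sum_(p in [set: 'I_s]) f i by rewrite sumr_const cardsT card_ord mulr_natl.
apply: (@le_trans _ _ (\sum_(p in [set: 'I_s]) f (g p))).
  have ge_trans : transitive (fun i j => f j <= f i) by move=> b a c h1 h2; apply: le_trans h2 h1.
  apply: ler_sum => p _; rewrite -{1}(nth_index i iL).
  apply: (sorted_leq_nth ge_trans _ i (sort_sorted _ _)); rewrite ?inE ?g_size ?index_mem //.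
  - by move=> a b; rewrite orbC; apply: real_leVge; apply: ger0_real.
  by apply: ltnW; apply: leq_trans (g_lt p) jq.
rewrite -big_imset //; apply: ler_sum_subset => // l /imsetP [p _ ->].
exact: nth_block.
Qed.

Lemma sqrt_block_succ_le j :
  sqrtC s%:R * sqrtC (\sum_(i in block j.+1) f i ^+ 2) <= \sum_(l in block j) f l.
Proof.
have t0 : 0 <= \sum_(l in block j) f l by apply: sumr_ge0.
rewrite -sqrtCM_nneg ?ler0n ?sumr_ge0 // => [|i _]; last exact: exprn_ge0.
apply: sqrtC_le => //; first by rewrite mulr_ge0 ?ler0n ?sumr_ge0 // => i _; rewrite exprn_ge0.
have s0 : 0 < s%:R :> C by rewrite ltr0n.
rewrite -(ler_pM2l s0) mulrA -expr2 mulr_sumr.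
under eq_bigr do rewrite -exprMn.
apply: (@le_trans _ _ (\sum_(i in block j.+1) (\sum_(l in block j) f l) ^+ 2)).
  by apply: ler_sum => i ji; rewrite ler_sqr ?mulr_ge0 ?ler0n ?block_succ_le.
rewrite sumr_const -[X in X <= _]mulr_natl ler_wpM2r ?exprn_ge0 // ler_nat.
exact: card_block.
Qed.

End Blocks.

Section TailDecomposition.
Variables (C : numClosedFieldType) (n s : nat) (x0 xs : 'cV[C]_n).
Hypothesis s_gt0 : (0 < s)%N.

Let T := [set i | x0 i 0 != 0].
Let B := block s (fun i => `|xs i 0|) T.
Let u := restrict T xs.
Let w j := restrict (B j) xs.
Let z := u + w 0%N.
Let tail_l2 := \sum_(j < n) l2norm (w j.+1).
Let tail_l1 := \sum_(i | i \notin T) `|xs i 0|.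
Let cross := \sum_(j < n) sym u (w j.+1) + \sum_(j < n) sym (w 0%N) (w j.+1)
  + \sum_(i < n) \sum_(j < n) sym (2^-1 *: w i.+1) (w j.+1).

Lemma x0_supported : supported T x0.
Proof. by move=> i; rewrite inE negbK => /eqP. Qed.

Lemma z_eq_on_T i : i \in T -> z i 0 = xs i 0.
Proof. by move=> iT; rewrite !mxE iT inE iT /= addr0. Qed.

Lemma supported_z : supported (T :|: B 0%N) z.
Proof.
move=> i; rewrite in_setU negb_or => /andP [iT iB].
by rewrite !mxE (negbTE iT) (negbTE iB) addr0.
Qed.

Lemma xs_decomp : xs = z + \sum_(j < n) w j.+1.
Proof.
apply/matrixP => i j; rewrite (ord1 j) [RHS]mxE summxE.
have [iT|iT] := boolP (i \in T).
  by rewrite z_eq_on_T // big1 ?addr0 // => l _; rewrite mxE inE iT.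
rewrite !mxE (negbTE iT) add0r.
have blk_i := block_of_lt s (fun i => `|xs i 0|) iT.
case E0 : (block_of s (fun i => `|xs i 0|) T i) => [|b] /=.
  by rewrite inE iT E0 big1 ?addr0 // => l _; rewrite mxE inE iT E0.
have bn : (b < n)%N by rewrite ltnW // -E0.
rewrite inE iT E0 /= add0r (bigD1 (Ordinal bn)) //= mxE inE iT E0 eqxx big1 ?addr0 //.
move=> l /eqP nl; rewrite mxE inE iT E0 /=; case: eqP => // [[bl]].
by case: nl; apply: val_inj.
Qed.

Lemma outerB_decomp : outer xs - outer x0 = (outer z - outer x0) + cross.
Proof.
rewrite {1}xs_decomp outerD sym_addl !sym_sumr outer_sum /cross.
by rewrite -[LHS]addrA [RHS]addrACA [_ - outer x0]addrC.
Qed.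

Section SymBound.
Variables (phi : 'M[C]_n -> C) (lam : C).
Hypotheses (phi0 : phi 0 = 0) (phiD : forall X Y, phi (X + Y) <= phi X + phi Y).
Hypothesis phi_sym : forall (S : {set 'I_n}) x y, (#|S| <= s + s)%N ->
  supported S x -> supported S y -> phi (sym x y) <= lam * (2 * (l2norm x * l2norm y)).
Hypotheses (lam_ge0 : 0 <= lam) (card_T : (#|T| <= s)%N).

Let phi_sum (I : Type) (r : seq I) (P : pred I) F :
  phi (\sum_(i <- r | P i) F i) <= \sum_(i <- r | P i) phi (F i).
Proof. exact: ler_subadd_sum. Qed.

Let phi_sym_on (S S' : {set 'I_n}) x y : (#|S| <= s)%N -> (#|S'| <= s)%N ->
  supported S x -> supported S' y -> phi (sym x y) <= lam * (2 * (l2norm x * l2norm y)).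
Proof.
move=> cS cS' hx hy; apply: (phi_sym (S := S :|: S')).
- by rewrite (leq_trans (leq_card_setU _ _)) ?leq_add.
- exact: supported_sub (subsetUl _ _) hx.
- exact: supported_sub (subsetUr _ _) hy.
Qed.

Lemma phi_cross_le : phi cross <= lam * (2 * (l2norm u + l2norm (w 0%N)) * tail_l2 + tail_l2 ^+ 2).
Proof.
have cB j : (#|B j| <= s)%N := card_block _ _ s_gt0 j.
have supported_u : supported T u by exact: supported_restrict.
have supported_w j : supported (B j) (w j) by exact: supported_restrict.
have l2w_half j : l2norm (2^-1 *: w j) = 2^-1 * l2norm (w j).
  by rewrite l2normZ ger0_norm // invr_ge0 ler0n.
have hP : phi (\sum_(j < n) sym u (w j.+1)) <= lam * (2 * l2norm u * tail_l2).
  rewrite /tail_l2 !mulr_sumr; apply: le_trans (phi_sum _ _ _) _; apply: ler_sum => j _.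
  rewrite -[2 * _ * _]mulrA; exact: phi_sym_on card_T (cB _) supported_u (supported_w _).
have hQ : phi (\sum_(j < n) sym (w 0%N) (w j.+1)) <= lam * (2 * l2norm (w 0%N) * tail_l2).
  rewrite /tail_l2 !mulr_sumr; apply: le_trans (phi_sum _ _ _) _; apply: ler_sum => j _.
  by rewrite -[2 * _ * _]mulrA; apply: phi_sym_on (cB _) (cB _) (supported_w _) (supported_w _).
have hR : phi (\sum_(i < n) \sum_(j < n) sym (2^-1 *: w i.+1) (w j.+1)) <= lam * tail_l2 ^+ 2.
  rewrite /tail_l2 expr2 big_distrlr mulr_sumr; apply: le_trans (phi_sum _ _ _) _.
  apply: ler_sum => i _; rewrite mulr_sumr; apply: le_trans (phi_sum _ _ _) _.
  apply: ler_sum => j _.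
  apply: le_trans (phi_sym_on (cB i.+1) (cB j.+1) _ (supported_w _)) _.
    by move=> l lB; rewrite mxE supported_w ?mulr0.
  by rewrite l2w_half -[2^-1 * _ * _]mulrA mulVKf ?pnatr_eq0.
have -> : lam * (2 * (l2norm u + l2norm (w 0%N)) * tail_l2 + tail_l2 ^+ 2) =
    lam * (2 * l2norm u * tail_l2) + lam * (2 * l2norm (w 0%N) * tail_l2) + lam * tail_l2 ^+ 2.
  by ring.
apply: le_trans (phiD _ _) _; apply: lerD => //.
by apply: le_trans (phiD _ _) _; apply: lerD.
Qed.

End SymBound.

Lemma sqrt_tail_le : sqrtC s%:R * tail_l2 <= tail_l1.
Proof.
apply: (@le_trans _ _ (\sum_(j < n) \sum_(l in B j) `|xs l 0|)); last by rewrite sum_block.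
rewrite /tail_l2 mulr_sumr; apply: ler_sum => j _.
by rewrite /w l2norm_restrict; exact: sqrt_block_succ_le.
Qed.

Lemma l2norm_head_le : l2norm u + l2norm (w 0%N) <= sqrtC 2 * l2norm z.
Proof.
have z2 : l2norm z ^+ 2 = l2norm u ^+ 2 + l2norm (w 0%N) ^+ 2.
  rewrite !l2norm_sqrE -big_split; apply: eq_bigr => i _.
  have [iT|iT] := boolP (i \in T); last by rewrite !mxE /= (negbTE iT) normr0 expr0n !add0r.
  have iB : (i \in B 0%N) = false by rewrite inE iT.
  by rewrite !mxE /= iT iB normr0 expr0n !addr0.
rewrite -(ler_pXn2r (n := 2)) ?nnegrE ?addr_ge0 ?mulr_ge0 ?l2norm_ge0 ?sqrtC_ge0 ?ler0n //.
rewrite exprMn sqrtCK z2 -subr_ge0.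
have -> : 2 * (l2norm u ^+ 2 + l2norm (w 0%N) ^+ 2) - (l2norm u + l2norm (w 0%N)) ^+ 2 =
    l2norm u ^+ 2 + l2norm (w 0%N) ^+ 2 - 2 * (l2norm u * l2norm (w 0%N)) by ring.
by rewrite subr_ge0 real_mulr2_le_sqrD // ger0_real // l2norm_ge0.
Qed.

Section Cone.
Hypothesis cone : l1norm xs <= l1norm x0.

Lemma cone_tail_le : tail_l1 <= \sum_(i in T) (`|x0 i 0| - `|xs i 0|).
Proof.
rewrite sumrB lerBrDl.
have -> : \sum_(i in T) `|x0 i 0| = l1norm x0.
  rewrite /l1norm [RHS](bigID (mem T)) /= [X in _ = _ + X]big1 ?addr0 // => i iT.
  by rewrite x0_supported // normr0.
by apply: le_trans cone; rewrite /l1norm [X in _ <= X](bigID (mem T)) /tail_l1.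
Qed.

Lemma tail_le_aligned (g : C) : `|g| = 1 -> tail_l1 <= sqrtC #|T|%:R * l2norm (g *: z - x0).
Proof.
move=> g1; apply: le_trans cone_tail_le _.
apply: (@le_trans _ _ (\sum_(i in T) `|(g *: z - x0) i 0|)).
  apply: ler_sum => i iT; rewrite [(_ - x0) i 0]mxE [(g *: z) i 0]mxE [(- x0) i 0]mxE z_eq_on_T //.
  by have := lerB_normD (x0 i 0) (- (g * xs i 0)); rewrite normrN normrM g1 mul1r distrC.
apply: le_trans (sum_norm_le_sqrt_card _ _) _.
rewrite ler_wpM2l ?sqrtC_ge0 ?ler0n //.
apply: le_sqrtC; first by rewrite sumr_ge0 // => i _; rewrite exprn_ge0.
by apply: ler_sum_subset => // i; rewrite exprn_ge0.
Qed.

Lemma tail_sqr_le : tail_l1 ^+ 2 <= #|T|%:R * frob (outer z - outer x0).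
Proof.
set n0 := \sum_(i in T) `|x0 i 0|; set nT := \sum_(i in T) `|xs i 0|.
have nT0 : 0 <= nT by apply: sumr_ge0.
have tail_le : tail_l1 <= n0 - nT by rewrite -sumrB cone_tail_le.
apply: (@le_trans _ _ ((n0 - nT) * (n0 + nT))).
  rewrite expr2 ler_pM ?sumr_ge0 // (le_trans tail_le) // lerD2l.
  by rewrite (le_trans _ nT0) // oppr_le0.
have -> : (n0 - nT) * (n0 + nT) =
    \sum_(i in T) \sum_(j in T) (`|x0 i 0| * `|x0 j 0| - `|xs i 0| * `|xs j 0|).
  rewrite (_ : _ * _ = n0 * n0 - nT * nT); last by ring.
  rewrite /n0 /nT !mulr_suml -sumrB; apply: eq_bigr => i _.
  by rewrite !mulr_sumr -sumrB.
apply: (@le_trans _ _ (\sum_(i in T) \sum_(j in T) `|(outer z - outer x0) i j|)).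
  apply: ler_sum => i iT; apply: ler_sum => j jT.
  have -> : (outer z - outer x0) i j = xs i 0 * (xs j 0)^* - x0 i 0 * (x0 j 0)^*.
    by rewrite mxE [X in _ + X]mxE /outer !mul_adjmxE !z_eq_on_T.
  have := lerB_dist (x0 i 0 * (x0 j 0)^*) (xs i 0 * (xs j 0)^*).
  by rewrite !normrM !norm_conjC distrC.
rewrite pair_big /= (eq_bigl (fun p => p \in setX T T)) => [|[p1 p2]]; last by rewrite in_setX.
apply: le_trans (sum_norm_le_sqrt_card _ _) _.
rewrite cardsX natrM -expr2 sqrCK ?ler0n // ler_wpM2l ?ler0n // frob_pairE.
apply: le_sqrtC; first by rewrite sumr_ge0 // => p _; rewrite exprn_ge0.
by apply: ler_sum_subset => // p; rewrite exprn_ge0.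
Qed.

Lemma head_mul_aligned_le (g : C) :
  l2norm (g *: z - x0) ^+ 2 * (l2norm z ^+ 2 + l2norm x0 ^+ 2) <=
    2 * frob (outer z - outer x0) ^+ 2 ->
  (l2norm u + l2norm (w 0%N)) * l2norm (g *: z - x0) <= 2 * frob (outer z - outer x0).
Proof.
move=> /aligned_mull aligned; rewrite mulrC.
apply: le_trans (ler_wpM2l (l2norm_ge0 _) l2norm_head_le) _.
have two_sqrt : 2 = sqrtC 2 * sqrtC 2 :> C by rewrite -expr2 sqrtCK.
by rewrite mulrCA [X in _ <= X * _]two_sqrt -mulrA ler_wpM2l ?sqrtC_ge0 ?ler0n.
Qed.

Variables (k : nat) (a : C).
Hypotheses (a_gt0 : 0 < a) (ak_s : a * k%:R = s%:R) (card_T : (#|T| <= k)%N) (k_gt0 : (0 < k)%N).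

(* The two halves come from [sqrt a * |head| * tail_l2 <= 2 F] and [a * tail_l2^2 <= F]. *)
Lemma tail_energy_le :
  2 * (l2norm u + l2norm (w 0%N)) * tail_l2 + tail_l2 ^+ 2 <=
  (4 / sqrtC a + a^-1) * frob (outer z - outer x0).
Proof.
set F0 := frob _; set X := l2norm u + l2norm (w 0%N).
have F00 : 0 <= F0 := frob_ge0 _.
have X0 : 0 <= X by rewrite addr_ge0 ?l2norm_ge0.
have tail_l2_ge0 : 0 <= tail_l2 by rewrite sumr_ge0 // => j _; apply: l2norm_ge0.
have sa0 : 0 < sqrtC a by rewrite sqrtC_gt0.
have k0 : 0 < k%:R :> C by rewrite ltr0n.
have sk0 : 0 < sqrtC k%:R :> C by rewrite sqrtC_gt0.
have sqrt_s : sqrtC s%:R = sqrtC a * sqrtC k%:R by rewrite -ak_s sqrtCM_nneg ?ltW ?ler0n.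
have sqrt_T : sqrtC #|T|%:R <= sqrtC k%:R :> C by rewrite le_sqrtC ?ler0n ?ler_nat.
have [g g1 aligned] := phase_align z x0.
have A1 : sqrtC a * (X * tail_l2) <= 2 * F0.
  rewrite -(ler_pM2l sk0).
  have -> : sqrtC k%:R * (sqrtC a * (X * tail_l2)) = X * (sqrtC s%:R * tail_l2).
    by rewrite sqrt_s; ring.
  apply: le_trans (ler_wpM2l X0 (le_trans sqrt_tail_le (tail_le_aligned g1))) _.
  by rewrite mulrCA ler_pM ?sqrtC_ge0 ?ler0n ?mulr_ge0 ?l2norm_ge0 // head_mul_aligned_le.
have A2 : a * tail_l2 ^+ 2 <= F0.
  rewrite -(ler_pM2l k0).
  have -> : k%:R * (a * tail_l2 ^+ 2) = (sqrtC s%:R * tail_l2) ^+ 2.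
    by rewrite exprMn sqrtCK -ak_s; ring.
  apply: le_trans (ler_sqr _ sqrt_tail_le) _; first by rewrite mulr_ge0 ?sqrtC_ge0 ?ler0n.
  by apply: le_trans tail_sqr_le _; rewrite ler_wpM2r // ler_nat.
rewrite [_ * F0]mulrDl; apply: lerD.
  rewrite -(ler_pM2l sa0).
  have -> : sqrtC a * (2 * X * tail_l2) = 2 * (sqrtC a * (X * tail_l2)) by ring.
  have -> : sqrtC a * (4 / sqrtC a * F0) = 2 * (2 * F0) by field; rewrite gt_eqF.
  by rewrite ler_pM2l ?ltr0n.
by rewrite -(ler_pM2l a_gt0) mulVKf ?gt_eqF.
Qed.

Variables (m : nat) (av : 'I_m -> 'cV[C]_n) (c Cc : C).
Hypotheses (rip : RIP av 2 (2 * s) c Cc) (Cc_ge0 : 0 <= Cc) (k_le_s : (k <= s)%N).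
Hypothesis den_gt0 : 0 < c - Cc * (4 / sqrtC a + a^-1).

Lemma frob_le_meas_avg :
  frob (outer xs - outer x0) <=
  (1 + (4 / sqrtC a + a^-1)) / (c - Cc * (4 / sqrtC a + a^-1)) *
  meas_avg av (outer xs - outer x0).
Proof.
set beta := 4 / sqrtC a + a^-1; set F0 := frob (outer z - outer x0).
set energy := 2 * (l2norm u + l2norm (w 0%N)) * tail_l2 + tail_l2 ^+ 2.
have F00 : 0 <= F0 := frob_ge0 _.
have beta0 : 0 <= beta by rewrite addr_ge0 ?invr_ge0 ?divr_ge0 ?ler0n ?sqrtC_ge0 ?ltW.
have cardT : (#|T| <= s)%N := leq_trans card_T k_le_s.
have rip2 : RIP av 2 (s + s) c Cc by rewrite addnn -mul2n.
have frob_cross : frob cross <= 1 * energy.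
  by apply: phi_cross_le => // [||*]; [exact: frob0 | exact: frobD | rewrite mul1r frob_sym].
have meas_cross : meas_avg av cross <= Cc * energy.
  apply: phi_cross_le => //; [exact: meas_avg0 | exact: meas_avgD |].
  by move=> S x y cS hx hy; apply: RIP_sym rip2 cS hx hy Cc_ge0.
have cardTB : (#|T :|: B 0%N| <= s + s)%N.
  by rewrite (leq_trans (leq_card_setU _ _)) ?leq_add ?card_block.
have low : c * F0 <= meas_avg av (outer z - outer x0).
  exact: (RIP_outerB rip2 cardTB supported_z (supported_sub (subsetUl _ _) x0_supported)).1.
have head_le : (c - Cc * beta) * F0 <= meas_avg av (outer xs - outer x0).
  rewrite mulrBl lerBlDr; apply: le_trans low _.
  have -> : outer z - outer x0 = (outer xs - outer x0) + - cross by rewrite outerB_decomp addrK.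
  apply: le_trans (meas_avgD _ _ _) _; rewrite meas_avgN lerD2l -mulrA.
  by apply: le_trans meas_cross _; rewrite ler_wpM2l // tail_energy_le.
apply: le_trans (_ : (1 + beta) * F0 <= _).
  rewrite outerB_decomp mulrDl mul1r; apply: le_trans (frobD _ _) _; rewrite lerD2l.
  by apply: le_trans frob_cross _; rewrite mul1r tail_energy_le.
by rewrite -mulrA ler_wpM2l ?(addr_ge0 ler01 beta0) // (ler_pdivlMl _ _ den_gt0).
Qed.

End Cone.

End TailDecomposition.

Section Conclusion.
Variables (C : numClosedFieldType) (n m : nat) (av : 'I_m -> 'cV[C]_n).

Lemma real_le_min (x y z : C) : y \is Num.real -> z \is Num.real ->
  x <= y -> x <= z -> x <= Num.min y z.
Proof. by move=> yr zr xy xz; case: (real_leP yr zr). Qed.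

Lemma RIP_lower_le_upper K (c Cc : C) (i0 : 'I_n) : (0 < K)%N -> RIP av 2 K c Cc -> c <= Cc.
Proof.
move=> K_gt0 rip; pose e : 'cV[C]_n := \col_j (j == i0)%:R.
have supp_e : supported [set i0] e by move=> i; rewrite inE mxE => /negbTE ->.
have supp_0 : supported [set i0] (0 : 'cV[C]_n) by move=> i _; rewrite mxE.
have card1 : (#|[set i0]| <= K)%N by rewrite cards1.
have [lo hi] := RIP_outerB rip card1 supp_e supp_0.
have frob_e : frob (outer e - outer 0) = 1.
  rewrite /outer mul0mx subr0 frob_mul_adjmx -expr2 /l2norm sqrtCK (bigD1 i0) //= big1.
    by rewrite mxE eqxx normr1 expr1n addr0.
  by move=> i /negbTE ne; rewrite mxE ne normr0 expr0n.
by rewrite frob_e !mulr1 in lo hi; apply: le_trans lo hi.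
Qed.

Lemma ge1_of_RIP_gap (a c Cc : C) : 0 < a -> 0 < Cc -> c <= Cc ->
  0 < c - 4 * Cc / sqrtC a - Cc / a -> 1 <= a.
Proof.
move=> a0 Cc0 cC gap; rewrite real_leNgt ?real1 ?gtr0_real //; apply/negP => a_lt1.
have : Cc <= Cc / a by rewrite ler_peMr ?(ltW Cc0) // invf_ge1 // ltW.
have : 0 <= 4 * Cc / sqrtC a by rewrite !mulr_ge0 ?invr_ge0 ?sqrtC_ge0 ?ltW.
move: gap; rewrite -addrA -opprD subr_gt0 => gap h1 h2.
have : Cc / a <= 4 * Cc / sqrtC a + Cc / a by rewrite lerDr.
by move=> h3; have := lt_le_trans gap (le_trans cC (le_trans h2 h3)); rewrite ltxx.
Qed.

Lemma l1norm_le_sqrt_l2norm (y : 'cV[C]_m) : l1norm y <= sqrtC m%:R * l2norm y.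
Proof. by apply: le_trans (sum_norm_le_sqrt_card _ _) _; rewrite cardT size_enum_ord. Qed.

Lemma meas_avg_residual_le (x0 xs : 'cV[C]_n) (w y : 'cV[C]_m) (eps : C) :
  y = measure av (outer x0) + w -> l2norm w <= eps -> feasible av y eps xs ->
  meas_avg av (outer xs - outer x0) <= 2 * eps / sqrtC m%:R.
Proof.
move=> yE lw fs; rewrite /meas_avg.
have -> : measure av (outer xs - outer x0) = (measure av (outer xs) - y) + w.
  by rewrite measureB yE opprD addrA addrNK.
have l2_le : l2norm (measure av (outer xs) - y + w) <= 2 * eps.
  by apply: le_trans (l2normD _ _) _; rewrite mulr2n mulrDl mul1r lerD.
apply: le_trans (ler_wpM2l _ (l1norm_le_sqrt_l2norm _)) _.
  by rewrite invr_ge0 ler0n.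
have inv_sqr_mul (x : C) : (x ^+ 2)^-1 * x = x^-1.
  have [->|x_neq0] := eqVneq x 0; first by rewrite expr0n /= !invr0 mul0r.
  by rewrite expr2 invfM mulfVK.
rewrite mulrA -{1}(sqrtCK m%:R) inv_sqr_mul mulrC ler_wpM2r //.
by rewrite invr_ge0 sqrtC_ge0 ler0n.
Qed.

Lemma cV_neq0_entry (x : 'cV[C]_n) : x != 0 -> exists i, x i 0 != 0.
Proof.
move=> x_neq0; apply/existsP; apply: contraR x_neq0; rewrite negb_exists => /forallP x0.
by apply/eqP/matrixP => i j; rewrite (ord1 j) mxE; apply/eqP/negPn.
Qed.

Lemma aligned_error_le (x0 xs : 'cV[C]_n) (g K : C) : x0 != 0 ->
  l2norm (g *: xs - x0) ^+ 2 * (l2norm xs ^+ 2 + l2norm x0 ^+ 2) <=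
    2 * frob (outer xs - outer x0) ^+ 2 ->
  frob (outer xs - outer x0) <= K ->
  l2norm (g *: xs - x0) <= sqrtC 2 * K / l2norm x0 /\ l2norm (g *: xs - x0) ^+ 2 <= 2 * K.
Proof.
move=> x0_neq0 aligned FK; split.
  have DF := aligned_mulr aligned.
  rewrite ler_pdivlMr ?l2norm_gt0 //; apply: le_trans DF _.
  by rewrite ler_wpM2l ?sqrtC_ge0 ?ler0n.
have D2F := aligned_sqr aligned x0_neq0.
by apply: le_trans D2F _; rewrite ler_wpM2l ?ler0n.
Qed.

(* Here [n >= 1] is used only to bound [sqrtC n] below by [1]. *)
Lemma sqrt_error_le (C1 eps D : C) : (0 < n)%N -> 0 <= C1 -> 0 <= eps -> 0 <= D ->
  D ^+ 2 <= 2 * (C1 * (2 * eps / sqrtC m%:R)) ->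
  D <= 2 * sqrtC (2 * sqrtC 2 * C1) * sqrtC eps * sqrtC (sqrtC (n%:R / m%:R)).
Proof.
move=> n_gt0 C10 eps0 D0 D2.
have sqrt_ge1 (x : C) : 1 <= x -> 1 <= sqrtC x by move=> x1; rewrite -sqrtC1 le_sqrtC ?ler01.
have R0 : 0 <= 2 * sqrtC (2 * sqrtC 2 * C1) * sqrtC eps * sqrtC (sqrtC (n%:R / m%:R)).
  by rewrite !mulr_ge0 ?sqrtC_ge0 // ?divr_ge0 ?mulr_ge0 ?sqrtC_ge0 ?ler0n.
rewrite -(ler_pXn2r (n := 2)) // ?nnegrE //; apply: le_trans D2 _.
rewrite !exprMn !sqrtCK sqrtCM_nneg ?invr_ge0 ?ler0n // -{2}(sqrtCK m%:R) -exprVn.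
rewrite sqrCK ?invr_ge0 ?sqrtC_ge0 ?ler0n //.
have -> : 2 * (C1 * (2 * eps / sqrtC m%:R)) = (4 * C1 * eps / sqrtC m%:R) * 1 by ring.
have -> : 2 ^+ 2 * (2 * sqrtC 2 * C1) * eps * (sqrtC n%:R * (sqrtC m%:R)^-1) =
    (4 * C1 * eps / sqrtC m%:R) * ((2 * sqrtC 2) * sqrtC n%:R) by ring.
have s2 : 1 <= 2 * sqrtC 2 :> C.
  have s2 : 1 <= sqrtC 2 :> C by rewrite sqrt_ge1 ?ler1n.
  by apply: le_trans s2 _; rewrite ler_peMl ?sqrtC_ge0 ?ler1n.
have sn : 1 <= sqrtC n%:R :> C by rewrite sqrt_ge1 ?ler1n.
rewrite ler_wpM2l ?mulr_ge0 ?invr_ge0 ?sqrtC_ge0 ?ler0n //.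
by rewrite -[X in X <= _](mulr1 1) ler_pM ?ler01.
Qed.

Lemma phase_error_le (x0 xs : 'cV[C]_n) (C1 eps : C) :
  x0 != 0 -> 0 <= C1 -> 0 <= eps ->
  frob (outer xs - outer x0) <= C1 * (2 * eps / sqrtC m%:R) ->
  exists gamma : C, `|gamma| = 1 /\
    l2norm (gamma *: xs - x0) <=
      Num.min (2 * sqrtC 2 * C1 * eps / (sqrtC m%:R * l2norm x0))
              (2 * sqrtC (2 * sqrtC 2 * C1) * sqrtC eps * sqrtC (sqrtC (n%:R / m%:R))).
Proof.
move=> x0_neq0 C1_ge0 eps_ge0 frob_le.
have [g g1 aligned] := phase_align xs x0; exists g; split => //.
have [err_l2 err_sqr] := aligned_error_le x0_neq0 aligned frob_le.
have bound1_ge0 : 0 <= 2 * sqrtC 2 * C1 * eps / (sqrtC m%:R * l2norm x0).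
  by rewrite divr_ge0 ?mulr_ge0 ?l2norm_ge0 ?sqrtC_ge0 ?ler0n.
have bound2_ge0 : 0 <= 2 * sqrtC (2 * sqrtC 2 * C1) * sqrtC eps * sqrtC (sqrtC (n%:R / m%:R)).
  by rewrite !mulr_ge0 ?sqrtC_ge0 // ?divr_ge0 ?mulr_ge0 ?sqrtC_ge0 ?ler0n.
apply: real_le_min (ger0_real bound1_ge0) (ger0_real bound2_ge0) _ _.
  have -> : 2 * sqrtC 2 * C1 * eps / (sqrtC m%:R * l2norm x0) =
      sqrtC 2 * (C1 * (2 * eps / sqrtC m%:R)) / l2norm x0 by rewrite invfM; ring.
  exact: err_l2.
have [i0 _] := cV_neq0_entry x0_neq0.
exact: sqrt_error_le (leq_ltn_trans (leq0n i0) (ltn_ord i0)) C1_ge0 eps_ge0 (l2norm_ge0 _) err_sqr.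
Qed.

End Conclusion.

Theorem theorem2 (C : numClosedFieldType) (n m : nat) (av : 'I_m -> 'cV[C]_n)
  (k s : nat) (a c Cc : C) :
  (1 <= k)%N -> a \is Num.real -> 0 < a -> a * k%:R = s%:R ->
  c \is Num.real -> Cc \is Num.real -> 0 < c -> 0 < Cc ->
  RIP av 2 (2 * s) c Cc ->
  0 < c - 4 * Cc / sqrtC a - Cc / a ->
  forall (x0 : 'cV[C]_n), x0 != 0 -> (l0norm x0 <= k)%N ->
  forall (eps : C), eps \is Num.real -> 0 <= eps ->
  forall (w y : 'cV[C]_m), (forall j, w j 0 \is Num.real) -> l2norm w <= eps ->
  y = measure av (outer x0) + w ->
  forall (xs : 'cV[C]_n), feasible av y eps xs ->
  (forall x : 'cV[C]_n, feasible av y eps x -> l1norm xs <= l1norm x) ->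
  let C1 := (a^-1 + 4 / sqrtC a + 1) / (c - 4 * Cc / sqrtC a - Cc / a) in
  frob (outer xs - outer x0) <= C1 * (2 * eps / sqrtC m%:R) /\
  exists gamma : C, `|gamma| = 1 /\
    l2norm (gamma *: xs - x0) <=
      Num.min (2 * sqrtC 2 * C1 * eps / (sqrtC m%:R * l2norm x0))
              (2 * sqrtC (2 * sqrtC 2 * C1) * sqrtC eps *
                 sqrtC (sqrtC (n%:R / m%:R))).
Proof.
move=> k_gt0 _ a_gt0 ak_s _ _ _ Cc_gt0 rip gap x0 x0_neq0 l0 eps _ eps_ge0 w y _ lw yE xs
  feas_xs opt C1.
have [i0 _] := cV_neq0_entry x0_neq0.
have s_gt0 : (0 < s)%N by rewrite -(ltr0n C) -ak_s mulr_gt0 ?ltr0n.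
have c_le_Cc : c <= Cc by apply: (RIP_lower_le_upper i0 _ rip); rewrite muln_gt0.
have k_le_s : (k <= s)%N.
  by rewrite -(ler_nat C) -ak_s ler_peMl ?ler0n // (ge1_of_RIP_gap a_gt0 Cc_gt0 c_le_Cc gap).
have cone : l1norm xs <= l1norm x0.
  by apply: opt; rewrite /feasible yE opprD addrA subrr add0r l2normN.
have gapE : c - 4 * Cc / sqrtC a - Cc / a = c - Cc * (4 / sqrtC a + a^-1) by ring.
have C1E : C1 = (1 + (4 / sqrtC a + a^-1)) / (c - Cc * (4 / sqrtC a + a^-1)).
  by rewrite /C1 gapE; congr (_ / _); ring.
have C1_ge0 : 0 <= C1.
  apply: divr_ge0; last exact: ltW.
  by rewrite !addr_ge0 ?ler01 ?invr_ge0 ?divr_ge0 ?ler0n ?sqrtC_ge0 ?ltW.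
clearbody C1.
have frob_le : frob (outer xs - outer x0) <= C1 * (2 * eps / sqrtC m%:R).
  rewrite C1E; apply: le_trans (frob_le_meas_avg s_gt0 cone a_gt0 ak_s l0 k_gt0 rip
    (ltW Cc_gt0) k_le_s _) _; first by rewrite -gapE.
  by rewrite ler_wpM2l -?C1E // (meas_avg_residual_le yE lw feas_xs).
by split; last exact: phase_error_le.
Qed.
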